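(* Consider the discrete-time system $x(t+1) = A x(t) + B u(t) + C v(t) + w$ with $A \in \mathbb{R}^{d_x\times d_x}$, $B\in\mathbb{R}^{d_x\times d_u}$, $C \in\mathbb{R}^{d_x\times d_v}$, constant $w\in\mathbb{R}^{d_x}$, control constraint $\mathcal U = \{u\in\mathbb{R}^{d_u}\mid \underline u\leq u\leq\overline u\}$ (with $\underline u \leq \overline u$), disturbance constraint $\mathcal V = \langle c_{\mathcal V}\mid G_{\mathcal V}\rangle$ with $G_{\mathcal V}\in\mathbb{R}^{d_v\times n_{\mathcal V}}$, and state constraint $\mathcal X = \{x\in\mathbb{R}^{d_x}\mid\underline x\leq x\leq\overline x\}$. Let $T\geq 0$ be an integer. Let $G_{\mathcal I} \in \mathbb{R}^{d_x\times n_{\mathcal I}}$, $\alpha \in \mathbb{R}^{d_x}$, $\gamma\in\mathbb{R}^{n_{\mathcal I}}$ with $\gamma \geq 0$, $\Gamma = \mathrm{diag}(\gamma)$, $\mathcal I = \langle \alpha \mid G_{\mathcal I}\Gamma\rangle$. For $t = 0,\ldots,T-1$ let $\beta(t)\in\mathbb{R}^{d_u}$, $\Phi(t)\in\mathbb{R}^{d_u\times n_{\mathcal I}}$, $G_{\mathcal F(t)}\in\mathbb{R}^{d_u\times m_t}$ and $\psi(t)\in\mathbb{R}^{m_t}$ with $\psi(t)\geq 0$. Suppose that for all $t = 0,\ldots,T$ \[ A^t\alpha + \sum_{s=0}^{t-1}A^{t-1-s}\big(B\beta(s) + Cc_{\mathcal V} + w\big) - \Big|A^tG_{\mathcal I}\Gamma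 + \sum_{s=0}^{t-1}A^{t-1-s}B\Phi(s)\Big|\mathbf{1}_{n_{\mathcal I}} - \sum_{s=0}^{t-1}|A^{t-1-s}BG_{\mathcal F(s)}|\psi(s) - \sum_{s=0}^{t-1}|A^{t-1-s}CG_{\mathcal V}|\mathbf{1}_{n_{\mathcal V}} \geq \underline x, \] \[ A^t\alpha + \sum_{s=0}^{t-1}A^{t-1-s}\big(B\beta(s) + Cc_{\mathcal V} + w\big) + \Big|A^tG_{\mathcal I}\Gamma + \sum_{s=0}^{t-1}A^{t-1-s}B\Phi(s)\Big|\mathbf{1}_{n_{\mathcal I}} + \sum_{s=0}^{t-1}|A^{t-1-s}BG_{\mathcal F(s)}|\psi(s) + \sum_{s=0}^{t-1}|A^{t-1-s}CG_{\mathcal V}|\mathbf{1}_{n_{\mathcal V}} \leq \overline x, \] and that for all $t = 0,\ldots,T-1$ \[ \beta(t) - |\Phi(t)|\mathbf{1}_{n_{\mathcal I}} - |G_{\mathcal F(t)}|\psi(t) \geq \underline u, \qquad \beta(t) + |\Phi(t)|\mathbf{1}_{n_{\mathcal I}} + |G_{\mathcal F(t)}|\psi(t) \leq \overline u. \] Then $\mathcal I \subseteq \mathrm{Disc}_{[0,T]}(\mathcal X)$, where $\mathrm{Disc}_{[0,T]}(\mathcal X)$ is the set of $x(0)\in\mathcal X$ for which there exists an input signal with $u(t)\in\mathcal U$ for $t=0,\ldots,T$ such that for every disturbance signal with $v(t)\in\mathcal V$ for $t = 0,\ldots,T$, the resulting trajectory satisfies $x(t)\in\mathcal X$ for all $t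=0,\ldots,T$.
   Context: Vector inequalities are elementwise; $|M|$ is the elementwise absolute value; $\mathbf{1}_n$ is the all-ones vector in $\mathbb{R}^n$. The notation $\langle c \mid G\rangle$ denotes the zonotope $\{c + G\lambda : \lambda \in [-1,1]^n\}$ with center $c$ and generator matrix $G$. $\mathrm{diag}(\gamma)$ is the diagonal matrix with $\gamma$ on its diagonal. *)

From mathcomp Require Import all_boot all_order all_algebra.
Set Implicit Arguments. Unset Strict Implicit. Unset Printing Implicit Defensive.
Import Order.TTheory GRing.Theory Num.Theory.
Local Open Scope ring_scope.

Section Defs.
Variable R : realFieldType.

Definition vle n (x y : 'cV[R]_n) : Prop := forall i, x i 0 <= y i 0.

Definition mabs m n (M : 'M[R]_(m, n)) : 'M[R]_(m, n) := map_mx (fun a => `|a|) M.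

Definition ones n : 'cV[R]_n := const_mx 1.

Definition in_zonotope d n (c : 'cV[R]_d) (G : 'M[R]_(d, n)) (x : 'cV[R]_d) : Prop :=
  exists lam : 'cV[R]_n, (forall i, -1 <= lam i 0 <= 1) /\ x = c + G *m lam.

Definition in_box d (lo hi x : 'cV[R]_d) : Prop := vle lo x /\ vle x hi.

Fixpoint traj dx du dv (A : 'M[R]_dx) (B : 'M[R]_(dx, du)) (C : 'M[R]_(dx, dv))
  (w : 'cV[R]_dx) (x0 : 'cV[R]_dx) (u : nat -> 'cV[R]_du) (v : nat -> 'cV[R]_dv)
  (t : nat) : 'cV[R]_dx :=
  match t with
  | 0 => x0
  | t'.+1 => A *m traj A B C w x0 u v t' + B *m u t' + C *m v t' + w
  end.

Definition Disc dx du dv nV (A : 'M[R]_dx) (B : 'M[R]_(dx, du)) (C : 'M[R]_(dx, dv))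
  (w : 'cV[R]_dx) (ulo uhi : 'cV[R]_du) (cV : 'cV[R]_dv) (GV : 'M[R]_(dv, nV))
  (xlo xhi : 'cV[R]_dx) (T : nat) (x0 : 'cV[R]_dx) : Prop :=
  in_box xlo xhi x0 /\
  exists u : nat -> 'cV[R]_du,
    (forall t, (t <= T)%N -> in_box ulo uhi (u t)) /\
    forall v : nat -> 'cV[R]_dv,
      (forall t, (t <= T)%N -> in_zonotope cV GV (v t)) ->
      forall t, (t <= T)%N -> in_box xlo xhi (traj A B C w x0 u v t).

End Defs.

From mathcomp Require Import all_boot all_order all_algebra.
Set Implicit Arguments. Unset Strict Implicit. Unset Printing Implicit Defensive.
Import Order.TTheory GRing.Theory Num.Theory.
Local Open Scope ring_scope.

(* Write x(0) = alpha + G_I Gamma lam with lam in the unit cube and apply the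
   affine feedback u(t) = beta(t) + Phi(t) lam.  By variation of constants,
   x(t) is then the centre A^t alpha + sum_s A^(t-1-s) (B beta(s) + C c_V + w)
   plus (A^t G_I Gamma + sum_s A^(t-1-s) B Phi(s)) lam plus the disturbance
   terms A^(t-1-s) C (v(s) - c_V) = A^(t-1-s) C G_V mu(s).  Since
   |M lam| <= |M| 1 on the unit cube, the deviation from the centre is
   bounded entrywise by the radius in the hypothesis; the G_F psi terms are
   nonnegative and only enlarge that radius. *)

Section ZonotopeBounds.
Variable R : realFieldType.

Definition unit_cube n (lam : 'cV[R]_n) : Prop := forall i, -1 <= lam i 0 <= 1.

Lemma in_zonotope_center d n (c : 'cV[R]_d) (G : 'M[R]_(d, n)) : in_zonotope c G c.
Proof.
exists 0; split=> [i|]; last by rewrite mulmx0 addr0.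
by rewrite mxE lerN10 ler01.
Qed.

Lemma norm_mulmx_cube_le p q (M : 'M[R]_(p, q)) (lam : 'cV[R]_q) i :
  unit_cube lam -> `|(M *m lam) i 0| <= (mabs M *m ones R q) i 0.
Proof.
move=> Hlam; rewrite !mxE; apply: le_trans (ler_norm_sum _ _ _) _.
apply: ler_sum => j _; rewrite !mxE normrM mulr1 ler_piMr //.
by rewrite ler_norml.
Qed.

Lemma norm_mulmx_zonotope_le d p n (M : 'M[R]_(p, d)) (c x : 'cV[R]_d)
    (G : 'M[R]_(d, n)) i :
  in_zonotope c G x -> `|(M *m (x - c)) i 0| <= (mabs (M *m G) *m ones R n) i 0.
Proof.
by move=> [lam [Hlam ->]]; rewrite addrC addKr mulmxA; apply: norm_mulmx_cube_le.
Qed.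

Lemma mabs_mulmx_ge0 p q (M : 'M[R]_(p, q)) (psi : 'cV[R]_q) i :
  vle 0 psi -> 0 <= (mabs M *m psi) i 0.
Proof.
move=> psi_ge0; rewrite !mxE; apply: sumr_ge0 => j _; rewrite !mxE mulr_ge0 //.
by have := psi_ge0 j; rewrite mxE.
Qed.

Lemma norm_sum_col_le p t (F r : 'I_t -> 'cV[R]_p) i :
  (forall s, `|F s i 0| <= r s i 0) ->
  `|(\sum_(s < t) F s) i 0| <= (\sum_(s < t) r s) i 0.
Proof.
move=> HF; rewrite !summxE; apply: le_trans (ler_norm_sum _ _ _) _.
exact: ler_sum.
Qed.

Lemma norm_addmx_le d (y1 y2 r1 r2 : 'cV[R]_d) i :
  `|y1 i 0| <= r1 i 0 -> `|y2 i 0| <= r2 i 0 -> `|(y1 + y2) i 0| <= (r1 + r2) i 0.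
Proof. by rewrite !mxE => h1 h2; apply: le_trans (ler_normD _ _) (lerD h1 h2). Qed.

Lemma in_box_addr d (lo hi c r y : 'cV[R]_d) :
  vle lo (c - r) -> vle (c + r) hi -> (forall i, `|y i 0| <= r i 0) ->
  in_box lo hi (c + y).
Proof.
move=> Hlo Hhi Hy; split=> i; move: (Hlo i) (Hhi i) (Hy i); rewrite !mxE ler_norml.
- by move=> h _ /andP[hy _]; apply: le_trans h _; rewrite lerD2l.
- by move=> _ h /andP[_ hy]; apply: le_trans h; rewrite lerD2l.
Qed.

End ZonotopeBounds.

Section Trajectory.
Variables (R : realFieldType) (dx du dv : nat).
Variables (A : 'M[R]_dx) (B : 'M[R]_(dx, du)) (C : 'M[R]_(dx, dv)) (w : 'cV[R]_dx).

Lemma trajE x0 u v t :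
  traj A B C w x0 u v t =
    A ^+ t *m x0 + \sum_(s < t) A ^+ (t - 1 - s) *m (B *m u s + C *m v s + w).
Proof.
elim: t => [|t IH]; first by rewrite big_ord0 expr0 mul1mx addr0.
rewrite /= IH big_ord_recr /= subSS subn0 subnn expr0 mul1mx mulmxDr mulmx_sumr.
rewrite mulmxA mulmxE -exprS -!addrA; congr (_ + (_ + _)).
apply: eq_bigr => s _; rewrite mulmxA mulmxE -exprS.
by rewrite subnAC subn1 prednK // subn_gt0.
Qed.

Lemma traj_affine_feedback nI (alpha : 'cV[R]_dx) (K : 'M[R]_(dx, nI))
    (lam : 'cV[R]_nI) (beta : nat -> 'cV[R]_du) (Phi : nat -> 'M[R]_(du, nI))
    (cV : 'cV[R]_dv) u v t :
  (forall s, (s < t)%N -> u s = beta s + Phi s *m lam) ->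
  traj A B C w (alpha + K *m lam) u v t =
    A ^+ t *m alpha + \sum_(s < t) A ^+ (t - 1 - s) *m (B *m beta s + C *m cV + w)
    + (A ^+ t *m K + \sum_(s < t) A ^+ (t - 1 - s) *m B *m Phi s) *m lam
    + \sum_(s < t) A ^+ (t - 1 - s) *m C *m (v s - cV).
Proof.
move=> Hu; rewrite trajE.
have split_step (s : 'I_t) : B *m u s + C *m v s + w =
    (B *m beta s + C *m cV + w) + (B *m Phi s *m lam + C *m (v s - cV)).
  rewrite Hu // mulmxDr mulmxBr mulmxA.
  set a := B *m beta s; set b := B *m Phi s *m lam; set c := C *m v s.
  set e := C *m cV.
  by rewrite [a + e + w]addrAC -[RHS]addrA [e + _]addrCA subrKC addrA
    [LHS]addrAC [a + b + w]addrAC.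
under eq_bigr => s _ do rewrite split_step mulmxDr [X in _ + X]mulmxDr !mulmxA.
rewrite !big_split /= mulmxDr mulmxDl mulmx_suml mulmxA.
by rewrite !addrA; congr (_ + _ + _); rewrite addrAC.
Qed.

End Trajectory.

Arguments traj_affine_feedback {R dx du dv A B C w nI alpha K lam beta Phi} cV {u v t}.

Theorem proposition6p2 (R : realFieldType) (dx du dv nV nI : nat) (T : nat)
  (A : 'M[R]_dx) (B : 'M[R]_(dx, du)) (C : 'M[R]_(dx, dv)) (w : 'cV[R]_dx)
  (ulo uhi : 'cV[R]_du) (cV : 'cV[R]_dv) (GV : 'M[R]_(dv, nV))
  (xlo xhi : 'cV[R]_dx)
  (GI : 'M[R]_(dx, nI)) (alpha : 'cV[R]_dx) (gamma : 'cV[R]_nI)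
  (beta : nat -> 'cV[R]_du) (Phi : nat -> 'M[R]_(du, nI))
  (m : nat -> nat) (GF : forall t : nat, 'M[R]_(du, m t))
  (psi : forall t : nat, 'cV[R]_(m t)) :
  vle ulo uhi ->
  vle 0 gamma ->
  (forall t, (t < T)%N -> vle 0 (psi t)) ->
  (forall t, (t <= T)%N ->
     let ctr := A ^+ t *m alpha
       + \sum_(s < t) A ^+ (t - 1 - s) *m (B *m beta s + C *m cV + w) in
     let rad := mabs (A ^+ t *m GI *m diag_mx gamma^T
                      + \sum_(s < t) A ^+ (t - 1 - s) *m B *m Phi s) *m ones R nI
       + \sum_(s < t) mabs (A ^+ (t - 1 - s) *m B *m GF s) *m psi s
       + \sum_(s < t) mabs (A ^+ (t - 1 - s) *m C *m GV) *m ones R nV in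
     vle xlo (ctr - rad) /\ vle (ctr + rad) xhi) ->
  (forall t, (t < T)%N ->
     let rad := mabs (Phi t) *m ones R nI + mabs (GF t) *m psi t in
     vle ulo (beta t - rad) /\ vle (beta t + rad) uhi) ->
  forall x0 : 'cV[R]_dx,
    in_zonotope alpha (GI *m diag_mx gamma^T) x0 ->
    Disc A B C w ulo uhi cV GV xlo xhi T x0.
Proof.
move=> le_ulo_uhi _ psi_ge0 state_bounds input_bounds x0 [lam [lam_cube ->]].
(* u(T) does not affect x(0), ..., x(T), but Disc still requires u(T) in U. *)
pose u t := if (t < T)%N then beta t + Phi t *m lam else ulo.
have u_feedback t : (t <= T)%N -> forall s, (s < t)%N -> u s = beta s + Phi s *m lam.
  by move=> Ht s st; rewrite /u (leq_trans st Ht).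
have state_in_box v : (forall t, (t <= T)%N -> in_zonotope cV GV (v t)) ->
    forall t, (t <= T)%N ->
    in_box xlo xhi (traj A B C w (alpha + GI *m diag_mx gamma^T *m lam) u v t).
  move=> Hv t Ht.
  rewrite (traj_affine_feedback cV (u_feedback t Ht)).
  rewrite [A ^+ t *m (_ *m _)]mulmxA -addrA.
  have [lo_ctr ctr_hi] := state_bounds t Ht; apply: (in_box_addr lo_ctr ctr_hi) => i.
  apply: norm_addmx_le; last first.
    apply: norm_sum_col_le => s; apply: norm_mulmx_zonotope_le; apply: Hv.
    exact: ltnW (leq_trans (ltn_ord s) Ht).
  apply: le_trans (norm_mulmx_cube_le _ i lam_cube) _; rewrite [X in _ <= X]mxE lerDl.
  rewrite summxE; apply: sumr_ge0 => s _; apply: mabs_mulmx_ge0; apply: psi_ge0.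
  exact: leq_trans (ltn_ord s) Ht.
split.
  exact: (state_in_box (fun=> cV) (fun _ _ => in_zonotope_center _ _) 0%N (leq0n T)).
exists u; split=> [t Ht|]; last exact: state_in_box.
rewrite /u; case: ifP => [HtT|_]; last by split=> // i; exact: lexx.
have [lo_ctr ctr_hi] := input_bounds t HtT; apply: (in_box_addr lo_ctr ctr_hi) => i.
apply: le_trans (norm_mulmx_cube_le _ i lam_cube) _.
rewrite [X in _ <= X]mxE lerDl; apply: mabs_mulmx_ge0; exact: psi_ge0.
Qed.
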